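(* Let $Q$ be a quadrilateral in $K^2$. (1) Every $Q$-orthogonal pair $\{\ell_1,\ell_2\}$ of bisectors of $Q$ such that $\ell_1$ and $\ell_2$ are not both parallel to a pair of parallel sides or parallel diagonals of $Q$ is $Q$-antipodal, and hence is a $Q$-pair. (2) Every $Q$-antipodal pair of bisectors of $Q$ that do not share a midpoint is $Q$-orthogonal, and hence is a $Q$-pair.
   Context: $K$ is a field of characteristic $\neq 2$. Every line $L$ in $K^2$ has an equation $tX-uY+v=0$ normalized so that $t=1$ if $u=0$ and $u=1$ if $u\neq 0$; coefficients denoted $t_L,u_L,v_L$. A quadrilateral $Q=ABA'B'$ consists of four distinct lines $A,B,A',B'$ (sides), not all through one point, with adjacent sides ($A,B$; $B,A'$; $A',B'$; $B',A$) not parallel; opposite sides may be parallel. Vertices: $A\cap B$, $B\cap A'$, $A'\cap B'$, $B'\cap A$ (two may coincide if three sides are concurrent). Diagonals: the lines through nonadjacent vertices. The centroid is the average of the four vertices. Let $\alpha=t_Au_Bu_{A'}u_{B'}-u_At_Bu_{A'}u_{B'}+u_Au_Bt_{A'}u_{B'}-u_Au_Bu_{A'}t_{B'}$, $\beta=t_Au_Bt_{A'}u_{B'}-u_At_Bu_{A'}t_{B'}$, $\gamma=t_At_Bt_{A'}u_{B'}-t_At_Bu_{A'}t_{B'}+t_Au_Bt_{A'}t_{B'}-u_At_Bt_{A'}t_{B'}$, and $\langle \mathbf v,\mathbf w\rangle_Q=\mathbf v^T\begin{pmatrix}\gamma&-\beta\\-\beta&\alpha\end{pmatrix}\mathbf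 w$. Lines $\ell_1,\ell_2$ are $Q$-orthogonal if $\langle (u_{\ell_1},t_{\ell_1}),(u_{\ell_2},t_{\ell_2})\rangle_Q=0$. A line $\ell$ crosses a pair $\{\ell_1,\ell_2\}$ if distinct from both and not parallel to both; $\mathrm{mid}_{\{\ell_1,\ell_2\}}(\ell)$ is the midpoint of the points where $\ell$ meets $\ell_1,\ell_2$ (the point at infinity of $\ell$ if one is at infinity). $\ell$ bisects $Q$ (is a bisector) if $\mathrm{mid}_{\mathsf P}(\ell)$ is the same for all pairs $\mathsf P$ among $\{A,A'\},\{B,B'\}$ that $\ell$ crosses; this common point is the midpoint of the bisector. A pair $\{\ell_1,\ell_2\}$ of bisectors (possibly $\ell_1=\ell_2$) is $Q$-antipodal if the midpoint of their midpoints is the centroid of $Q$, and is a $Q$-pair if it is both $Q$-antipodal and $Q$-orthogonal. *)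

From mathcomp Require Import all_boot all_order all_algebra.
Set Implicit Arguments. Unset Strict Implicit. Unset Printing Implicit Defensive.
Import Order.TTheory GRing.Theory Num.Theory.
Local Open Scope ring_scope.

Section Geometry.
Variable K : fieldType.

Definition point := (K * K)%type.

(* A line  t X - u Y + v = 0, normalized: t = 1 if u = 0, and u = 1 if u <> 0. *)
Record line := Line {
  lt : K; lu : K; lv : K;
  line_norm : ((lu == 0) && (lt == 1)) || (lu == 1) }.

Definition on_line (p : point) (l : line) : Prop :=
  lt l * p.1 - lu l * p.2 + lv l = 0.

Lemma mkline_norm0 : ((0 : K) == 0) && ((1 : K) == 1) || ((0 : K) == 1).
Proof. by rewrite !eqxx. Qed.
Lemma mkline_norm1 (t : K) : ((1 : K) == 0) && (t == 1) || ((1 : K) == 1).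
Proof. by rewrite eqxx orbT. Qed.
Definition mkline (t u v : K) : line :=
  if u == 0 then @Line 1 0 (v / t) mkline_norm0
  else @Line (t / u) 1 (v / u) (mkline_norm1 (t / u)).

Definition line_through (p q : point) : line :=
  mkline (q.2 - p.2) (q.1 - p.1) ((q.1 - p.1) * p.2 - (q.2 - p.2) * p.1).

(* parallel = same direction (normalized (t,u) coincide); includes equality *)
Definition parallel (l m : line) : bool := (lt l == lt m) && (lu l == lu m).

(* intersection point of two non-parallel lines (Cramer's rule) *)
Definition meet (l m : line) : point :=
  let D := lu l * lt m - lt l * lu m in
  ((lv l * lu m - lu l * lv m) / D, (lt m * lv l - lt l * lv m) / D).

Definition midpt (p q : point) : point := ((p.1 + q.1) / 2%:R, (p.2 + q.2) / 2%:R).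

Definition quadrilateral (A B A' B' : line) : Prop :=
  [/\ (A <> B /\ A <> A' /\ A <> B' /\ B <> A' /\ B <> B' /\ A' <> B'),
      ~ (exists p : point, [/\ on_line p A, on_line p B, on_line p A' & on_line p B']) &
      [/\ ~ parallel A B, ~ parallel B A', ~ parallel A' B' & ~ parallel B' A]].

Definition vtx1 (A B A' B' : line) : point := meet A B.
Definition vtx2 (A B A' B' : line) : point := meet B A'.
Definition vtx3 (A B A' B' : line) : point := meet A' B'.
Definition vtx4 (A B A' B' : line) : point := meet B' A.

Definition diag1 (A B A' B' : line) : line :=
  line_through (vtx1 A B A' B') (vtx3 A B A' B').
Definition diag2 (A B A' B' : line) : line :=
  line_through (vtx2 A B A' B') (vtx4 A B A' B').

Definition centroid (A B A' B' : line) : point :=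
  let p1 := vtx1 A B A' B' in let p2 := vtx2 A B A' B' in
  let p3 := vtx3 A B A' B' in let p4 := vtx4 A B A' B' in
  ((p1.1 + p2.1 + p3.1 + p4.1) / 4%:R, (p1.2 + p2.2 + p3.2 + p4.2) / 4%:R).

Definition qalpha (A B A' B' : line) : K :=
  lt A * lu B * lu A' * lu B' - lu A * lt B * lu A' * lu B'
  + lu A * lu B * lt A' * lu B' - lu A * lu B * lu A' * lt B'.
Definition qbeta (A B A' B' : line) : K :=
  lt A * lu B * lt A' * lu B' - lu A * lt B * lu A' * lt B'.
Definition qgamma (A B A' B' : line) : K :=
  lt A * lt B * lt A' * lu B' - lt A * lt B * lu A' * lt B'
  + lt A * lu B * lt A' * lt B' - lu A * lt B * lt A' * lt B'.

Definition qform (A B A' B' : line) (v w : K * K) : K :=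
  v.1 * (qgamma A B A' B' * w.1 - qbeta A B A' B' * w.2)
  + v.2 * (- qbeta A B A' B' * w.1 + qalpha A B A' B' * w.2).

Definition Qorthogonal (A B A' B' : line) (l1 l2 : line) : Prop :=
  qform A B A' B' (lu l1, lt l1) (lu l2, lt l2) = 0.

Definition crosses (l l1 l2 : line) : Prop :=
  [/\ l <> l1, l <> l2 & ~ (parallel l l1 /\ parallel l l2)].

(* mid_{l1,l2}(l): None stands for the point at infinity of l *)
Definition mid (l1 l2 l : line) : option point :=
  if parallel l l1 || parallel l l2 then None
  else Some (midpt (meet l l1) (meet l l2)).

Definition bisector_mid (A B A' B' : line) (l : line) (m : option point) : Prop :=
  [/\ crosses l A A' -> mid A A' l = m,
      crosses l B B' -> mid B B' l = m &
      crosses l A A' \/ crosses l B B'].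

Definition bisector (A B A' B' : line) (l : line) : Prop :=
  exists m, bisector_mid A B A' B' l m.

Definition Qantipodal (A B A' B' : line) (l1 l2 : line) : Prop :=
  exists m1 m2 : point,
    [/\ bisector_mid A B A' B' l1 (Some m1), bisector_mid A B A' B' l2 (Some m2)
      & midpt m1 m2 = centroid A B A' B'].

Definition Qpair (A B A' B' : line) (l1 l2 : line) : Prop :=
  Qantipodal A B A' B' l1 l2 /\ Qorthogonal A B A' B' l1 l2.

Definition both_par_to_parallel_pair (A B A' B' : line) (l1 l2 : line) : Prop :=
  [\/ [/\ parallel A A', parallel l1 A & parallel l2 A],
      [/\ parallel B B', parallel l1 B & parallel l2 B] |
      [/\ parallel (diag1 A B A' B') (diag2 A B A' B'),
          parallel l1 (diag1 A B A' B') & parallel l2 (diag1 A B A' B')]].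

End Geometry.

(* A line through [m] with direction [d] has midpoint [m] with respect to the
   opposite sides [X], [Y] iff [d] is parallel to a vector [mid_dir X Y m]
   that is affine in [m].  For a fixed direction [d], bisector midpoints
   therefore solve a 2x2 linear system of determinant [-2 <d, d>_Q], and every
   bisector midpoint [m] lies on the conic where [mid_dir A A' m] and
   [mid_dir B B' m] are parallel.  An explicit identity shows that on this
   conic both vectors are Q-orthogonal to [mid_dir A A' m*] and [mid_dir B B' m*],
   where [m*] is the reflection of [m] in the centroid.  The Q-form is
   nondegenerate: its discriminant is minus the product of the cross products of
   adjacent sides.
   (1) If [l2] is Q-orthogonal to a bisector [l1] with midpoint [m1], then [m1*]
   solves the system for the direction of [l2], so it is the midpoint of [l2]
   unless that direction is Q-isotropic.  Isotropy forces [l1 // l2], and a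
   degenerate system with a solution forces [l2] to be parallel to two
   parallel sides, or to both diagonals.
   (2) If the midpoints are [m1] and [m2 = m1*] with [m1 <> m2], then [m2] is not
   the centroid, so some [mid_dir _ m2] is a nonzero vector parallel to [l2]
   and Q-orthogonal to [l1]. *)

From mathcomp Require Import all_boot all_order all_algebra.
From mathcomp Require Import ring.
From Stdlib Require Import Classical.
Set Implicit Arguments. Unset Strict Implicit. Unset Printing Implicit Defensive.
Import GRing.Theory.
Local Open Scope ring_scope.

Section PlaneVectors.
Variable K : fieldType.
Implicit Types (u v w d x y : K * K).

Definition cross u v := u.1 * v.2 - u.2 * v.1.
Definition dot u v := u.1 * v.1 + u.2 * v.2.

Lemma pair_eq0 v : (v == 0) = (v.1 == 0) && (v.2 == 0).
Proof. by case: v => a b; rewrite xpair_eqE. Qed.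

Lemma pair_neq0 v : v != 0 -> v.1 != 0 \/ v.2 != 0.
Proof. by rewrite pair_eq0 negb_and => /orP. Qed.

Lemma crossvv v : cross v v = 0.
Proof. by rewrite /cross mulrC subrr. Qed.

Lemma crossC u v : cross u v = - cross v u.
Proof. rewrite /cross; ring. Qed.

Lemma cross_eq0_scale u v : u != 0 -> cross u v = 0 ->
  exists k, v = (k * u.1, k * u.2).
Proof.
case: u v => [a b] [c e] /pair_neq0 /= hu; rewrite /cross /= => /eqP.
rewrite subr_eq0 => /eqP h.
case: hu => [ha | hb].
- exists (c / a); congr pair; first by rewrite mulfVK.
  by apply: (mulfI ha); rewrite h; field.
- exists (e / b); congr pair; last by rewrite mulfVK.
  by apply: (mulfI hb); rewrite -h; field.
Qed.

Lemma cross_eq0_trans u v d : d != 0 -> cross u d = 0 -> cross v d = 0 ->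
  cross u v = 0.
Proof.
rewrite (crossC u) (crossC v) => hd /eqP; rewrite oppr_eq0 => /eqP.
move=> /(cross_eq0_scale hd) [k ->] /eqP; rewrite oppr_eq0 => /eqP.
move=> /(cross_eq0_scale hd) [k' ->]; rewrite /cross /=; ring.
Qed.

Lemma dot_eq0_pair u v x : cross u v != 0 -> dot u x = 0 -> dot v x = 0 ->
  x = 0.
Proof.
move=> huv hu hv; apply/eqP; rewrite pair_eq0.
have -> : x.1 = (v.2 * dot u x - u.2 * dot v x) / cross u v.
  by rewrite /dot /cross; field.
have -> : x.2 = (u.1 * dot v x - v.1 * dot u x) / cross u v.
  by rewrite /dot /cross; field.
by rewrite hu hv !mulr0 subrr mul0r eqxx.
Qed.

Lemma dot_eq0_cross w u v : w != 0 -> dot w u = 0 -> dot w v = 0 ->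
  cross u v = 0.
Proof.
move=> /pair_neq0 hw hu hv; apply/eqP.
case: hw => hw; rewrite -(mulIr_eq0 _ (mulIf hw)); apply/eqP.
- have -> : cross u v * w.1 = v.2 * dot w u - u.2 * dot w v.
    by rewrite /dot /cross; ring.
  by rewrite hu hv !mulr0 subrr.
- have -> : cross u v * w.2 = u.1 * dot w v - v.1 * dot w u.
    by rewrite /dot /cross; ring.
  by rewrite hu hv !mulr0 subrr.
Qed.

Lemma affine_proportional (f g : K * K -> K) u v x :
  (forall y z, f y - f z = dot u (y - z)) ->
  (forall y z, g y - g z = dot v (y - z)) ->
  u != 0 -> v != 0 -> cross u v = 0 -> f x = 0 -> g x = 0 ->
  exists2 k, k != 0 & forall y, g y = k * f y.
Proof.
move=> hf hg hu hv huv fx gx.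
have [k ev] := cross_eq0_scale hu huv.
exists k.
  by apply: contra hv => /eqP k0; rewrite ev k0 !mul0r.
move=> y; rewrite -[g y]subr0 -gx -[f y]subr0 -fx hf hg ev /dot /=; ring.
Qed.

Section BinaryForm.
Variables a b c : K.

Definition sform u v := u.1 * (c * v.1 - b * v.2) + u.2 * (- b * v.1 + a * v.2).

Lemma sformC u v : sform u v = sform v u.
Proof. rewrite /sform; ring. Qed.

Lemma sform_collinear v d x : v != 0 -> cross v d = 0 -> sform v x = 0 ->
  sform d x = 0.
Proof.
move=> hv /(cross_eq0_scale hv) [k ->] hx.
by rewrite -[RHS](mulr0 k) -hx /sform /=; ring.
Qed.

Lemma sform_kernel d x y : a * c - b ^+ 2 != 0 -> d != 0 ->
  sform d x = 0 -> sform d y = 0 -> cross x y = 0.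
Proof.
move=> hdisc hd hx hy.
pose g : K * K := (c * d.1 - b * d.2, - b * d.1 + a * d.2).
have gE z : sform d z = dot g z by rewrite /sform /dot /=; ring.
apply: (@dot_eq0_cross g); rewrite -?gE //.
apply: contra hd => /eqP g0; apply/eqP.
apply: (@dot_eq0_pair (c, - b) (- b, a)).
- by rewrite /cross /= mulrNN -expr2 mulrC.
- by rewrite -[RHS](congr1 fst g0) /dot /=; ring.
- by rewrite -[RHS](congr1 snd g0) /dot /=; ring.
Qed.

End BinaryForm.
End PlaneVectors.

Section Lines.
Variable K : fieldType.
Hypothesis two_neq0 : (2%:R : K) != 0.
Implicit Types (l n X Y : line K) (p q m P Q : point K) (d : K * K).

Definition leval l p := lt l * p.1 - lu l * p.2 + lv l.
Definition dir l : K * K := (lu l, lt l).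

Lemma dir_neq0 l : dir l != 0.
Proof.
case: l => t u v /= H; rewrite /dir pair_eq0 /=.
by case/orP: H => [/andP[/eqP-> /eqP->]|/eqP->]; rewrite oner_eq0 ?andbF.
Qed.

Lemma dir_scale_eq0 l (k : K) : k * lt l = 0 -> k * lu l = 0 -> k = 0.
Proof.
move=> /eqP ht /eqP hu; apply/eqP; apply: contraNT (dir_neq0 l) => hk.
by move: ht hu; rewrite pair_eq0 !mulf_eq0 (negbTE hk) /= => -> ->.
Qed.

Lemma parallel_dir l n : parallel l n = (dir l == dir n).
Proof. by rewrite /parallel /dir xpair_eqE andbC. Qed.

Lemma parallel_refl l : parallel l l.
Proof. by rewrite parallel_dir. Qed.

Lemma parallel_sym l n : parallel l n = parallel n l.
Proof. by rewrite !parallel_dir eq_sym. Qed.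

Lemma parallel_trans l n X : parallel l n -> parallel n X -> parallel l X.
Proof. by rewrite !parallel_dir => /eqP->. Qed.

Lemma parallel_common l X Y : parallel l X -> parallel l Y -> parallel X Y.
Proof. by rewrite !parallel_dir => /eqP<-. Qed.

Lemma parallel_cross l n : parallel l n = (cross (dir l) (dir n) == 0).
Proof.
case: l => t u v /= H; case: n => t' u' v' /= H'.
rewrite /parallel /cross /=.
case/orP: H => [/andP[/eqP-> /eqP->]|/eqP->];
case/orP: H' => [/andP[/eqP-> /eqP->]|/eqP->].
- by rewrite !eqxx mul0r mulr0 subrr eqxx.
- by rewrite mul0r mul1r sub0r oppr_eq0 oner_eq0 [0 == 1]eq_sym oner_eq0 andbF.
- by rewrite mul1r mulr0 subr0 oner_eq0 andbF.
- by rewrite eqxx andbT mul1r mulr1 subr_eq0 eq_sym.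
Qed.

Lemma cross_dir_parallel l n : cross (dir l) (dir n) = 0 -> parallel l n.
Proof. by rewrite parallel_cross => ->. Qed.

Lemma leval_meetl l n : ~~ parallel l n -> leval l (meet l n) = 0.
Proof.
rewrite parallel_cross /cross /= => h.
by rewrite /leval /meet /=; field.
Qed.

Lemma leval_meetr l n : ~~ parallel l n -> leval n (meet l n) = 0.
Proof.
rewrite parallel_cross /cross /= => h.
by rewrite /leval /meet /=; field.
Qed.

Lemma cross_dir_mkline (t u v : K) :
  (u, t) != 0 -> cross (u, t) (dir (mkline t u v)) = 0.
Proof.
rewrite /mkline; case: ifPn => [/eqP-> _ | hu _]; rewrite /dir /cross /=.
  by ring.
by field.
Qed.

Lemma parallel_line_through l P Q : P != Q -> cross (Q - P) (dir l) = 0 ->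
  parallel l (line_through P Q).
Proof.
rewrite eq_sym -subr_eq0 => hPQ hl; rewrite parallel_cross; apply/eqP.
apply: (@cross_eq0_trans _ _ _ (Q - P)) => //; first by rewrite crossC hl oppr0.
have -> : Q - P = (Q.1 - P.1, Q.2 - P.2) by [].
by rewrite crossC cross_dir_mkline ?oppr0.
Qed.

Definition mid_dir X Y p : K * K :=
  (leval X p * lu Y + leval Y p * lu X, leval X p * lt Y + leval Y p * lt X).

Lemma cross_mid_dir X Y p d :
  cross (mid_dir X Y p) d = leval X p * cross (dir Y) d + leval Y p * cross (dir X) d.
Proof. rewrite /cross /=; ring. Qed.

Lemma mid_dirC X Y : mid_dir X Y =1 mid_dir Y X.
Proof. by move=> p; rewrite /mid_dir addrC [_ * lt _ + _]addrC. Qed.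

Lemma mid_dir_eq0 X Y p : mid_dir X Y p = 0 ->
  (on_line p X /\ on_line p Y) \/ (parallel X Y /\ leval X p + leval Y p = 0).
Proof.
move=> h0; have [pXY|nXY] := boolP (parallel X Y); [right | left].
  split=> //; move: pXY h0; rewrite parallel_dir /mid_dir => /eqP [<- <-] /eqP.
  rewrite pair_eq0 /= -!mulrDl => /andP[/eqP hu /eqP ht].
  exact: (dir_scale_eq0 ht hu).
have : (leval X p, leval Y p) = 0.
  apply: (@dot_eq0_pair _ (lu Y, lu X) (lt Y, lt X)).
  - move: nXY; rewrite parallel_sym parallel_cross.
    by rewrite /cross /= [lu X * _]mulrC.
  - by rewrite -[RHS](congr1 fst h0) /dot /=; ring.
  - by rewrite -[RHS](congr1 snd h0) /dot /=; ring.
by case.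
Qed.

Lemma crosses_mid_dir X Y l m : crosses l X Y -> mid X Y l = Some m ->
  on_line m l /\ cross (mid_dir X Y m) (dir l) = 0.
Proof.
case=> _ _ _; rewrite /mid.
case: ifPn => // /norP[]; rewrite !parallel_cross /cross /= => hX hY [<-].
by split; rewrite /on_line ?cross_mid_dir /leval /cross /midpt /meet /=; field;
  rewrite two_neq0 hX hY.
Qed.

Lemma not_crosses_mid_dir X Y l m : ~ crosses l X Y -> on_line m l ->
  cross (mid_dir X Y m) (dir l) = 0.
Proof.
move=> hc hm; have lm : leval l m = 0 := hm; rewrite cross_mid_dir.
have [eX|nX] := classic (l = X).
  by rewrite -eX lm mul0r add0r crossvv mulr0.
have [eY|nY] := classic (l = Y).
  by rewrite -eY lm mul0r addr0 crossvv mulr0.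
have [pX pY] : parallel l X /\ parallel l Y.
  by apply: NNPP => hp; apply: hc; split.
move: pX pY; rewrite (parallel_sym l X) (parallel_sym l Y) !parallel_cross.
by move=> /eqP-> /eqP->; rewrite !mulr0 addr0.
Qed.

Lemma mid_dir_of_mid X Y l m :
  (crosses l X Y -> mid X Y l = Some m) -> on_line m l ->
  cross (mid_dir X Y m) (dir l) = 0.
Proof.
move=> hm lm; have [c|nc] := classic (crosses l X Y).
  exact: (crosses_mid_dir c (hm c)).2.
exact: not_crosses_mid_dir.
Qed.

Lemma no_mid_parallel X Y l : (crosses l X Y -> mid X Y l = None) ->
  parallel l X || parallel l Y.
Proof.
move=> h; have [c|nc] := classic (crosses l X Y).
  by move: (h c); rewrite /mid; case: ifP.
have [->|nX] := classic (l = X); first by rewrite parallel_refl.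
have [->|nY] := classic (l = Y); first by rewrite parallel_refl orbT.
by apply/orP; left; apply: NNPP => hX; apply: nc; split => // -[].
Qed.

Definition mid_grad X Y d : K * K :=
  (lt X * cross (dir Y) d + lt Y * cross (dir X) d,
   - (lu X * cross (dir Y) d + lu Y * cross (dir X) d)).

Lemma cross_mid_dirB X Y d p q :
  cross (mid_dir X Y p) d - cross (mid_dir X Y q) d =
  dot (mid_grad X Y d) (p - q).
Proof.
have -> : p - q = (p.1 - q.1, p.2 - q.2) by [].
rewrite !cross_mid_dir /leval /dot /= /cross /=; ring.
Qed.

Lemma dot_mid_grad X Y d :
  dot (mid_grad X Y d) d = - 2%:R * (cross (dir X) d * cross (dir Y) d).
Proof. rewrite /dot /= /cross /=; ring. Qed.

Lemma mid_grad_eq0 X Y d : mid_grad X Y d = 0 ->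
  cross (dir X) d = 0 /\ cross (dir Y) d = 0.
Proof.
move=> g0.
have /eqP : cross (dir X) d * cross (dir Y) d = 0.
  apply/eqP; move: (dot_mid_grad X Y d); rewrite g0 /dot /= !mul0r addr0.
  by move=> /esym/eqP; rewrite mulf_eq0 oppr_eq0 (negbTE two_neq0).
have [] : (mid_grad X Y d).1 = 0 /\ (mid_grad X Y d).2 = 0 by rewrite g0.
rewrite /= => e1 /eqP; rewrite oppr_eq0 => /eqP e2.
rewrite mulf_eq0 => /orP[] /eqP c0; move: e1 e2; rewrite c0 !mulr0 ?addr0 ?add0r.
- by rewrite mulrC => ht; rewrite mulrC => /(dir_scale_eq0 ht).
- by rewrite mulrC => ht; rewrite mulrC => /(dir_scale_eq0 ht).
Qed.

(* The affine function [k c_X' leval X - c_Y' leval Y] (with [c_Z] the cross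
   product of [dir Z] and [d]) vanishes at [P] and [Q], and its gradient [w] is
   orthogonal to [d]; [w = 0] would force [X' // d // Y']. *)
Lemma proportional_mid_dir_diagonal X Y X' Y' P Q d (k : K) :
  ~~ parallel X Y -> ~~ parallel X' Y' -> d != 0 -> k != 0 ->
  on_line P X -> on_line P Y -> on_line Q X' -> on_line Q Y' ->
  (forall x, cross (mid_dir Y Y' x) d = k * cross (mid_dir X X' x) d) ->
  cross (Q - P) d = 0.
Proof.
move=> nXY nX'Y' hd hk PX PY QX' QY' prop.
have [{}PX {}PY {}QX' {}QY'] :
  [/\ leval X P = 0, leval Y P = 0, leval X' Q = 0 & leval Y' Q = 0] by [].
have opp_two_neq0 : (- 2%:R : K) != 0 by rewrite oppr_eq0.
have prop_dd :
    cross (dir Y) d * cross (dir Y') d = k * (cross (dir X) d * cross (dir X') d).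
  have := cross_mid_dirB Y Y' d (P + d) P.
  rewrite !prop -mulrBr !cross_mid_dirB [P + d]addrC addrK !dot_mid_grad mulrCA.
  by move/(mulfI opp_two_neq0)/esym.
pose w : K * K := (k * cross (dir X') d * lt X - cross (dir Y') d * lt Y,
                   - (k * cross (dir X') d * lu X - cross (dir Y') d * lu Y)).
have wd : dot w d = 0.
  have -> : dot w d = cross (dir Y) d * cross (dir Y') d
                      - k * (cross (dir X) d * cross (dir X') d).
    by rewrite /dot /w /= /cross /=; ring.
  by rewrite prop_dd subrr.
have wQP : dot w (Q - P) = 0.
  have := prop Q; rewrite !cross_mid_dir QX' QY' !mul0r !addr0 => hQ.
  have -> : Q - P = (Q.1 - P.1, Q.2 - P.2) by [].
  have -> : dot w (Q - P) =
      (k * cross (dir X') d * leval X Q - cross (dir Y') d * leval Y Q)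
      - (k * cross (dir X') d * leval X P - cross (dir Y') d * leval Y P).
    by rewrite /dot /w /leval /=; ring.
  by rewrite PX PY (mulrC (cross (dir Y') d)) hQ; ring.
have [w0|wn0] := eqVneq w 0; last exact: dot_eq0_cross wn0 wQP wd.
have : (k * cross (dir X') d, - cross (dir Y') d) = 0.
  apply: (@dot_eq0_pair _ (lt X, lt Y) (lu X, lu Y)).
  - move: nXY; rewrite parallel_cross; apply: contra => /eqP h.
    by rewrite -oppr_eq0 -h /cross /=; apply/eqP; ring.
  - by rewrite -[RHS](congr1 fst w0) /dot /=; ring.
  - have -> : dot (lu X, lu Y) (k * cross (dir X') d, - cross (dir Y') d) = - w.2.
      by rewrite /dot /=; ring.
    by rewrite w0 oppr0.
case=> /eqP; rewrite mulf_eq0 (negbTE hk) /= => /eqP X'0.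
move=> /eqP; rewrite oppr_eq0 => /eqP Y'0.
by move: nX'Y'; rewrite parallel_cross (cross_eq0_trans hd X'0 Y'0) eqxx.
Qed.

End Lines.

Section Quadrilateral.
Variables (K : fieldType) (A B A' B' : line K).
Hypothesis two_neq0 : (2%:R : K) != 0.
Hypothesis hQ : quadrilateral A B A' B'.
Implicit Types (l : line K) (p q m : point K) (d : K * K).

Local Notation qf := (qform A B A' B').
Local Notation cen := (centroid A B A' B').

Lemma adjacent_cross_neq0 :
  [/\ cross (dir A) (dir B) != 0, cross (dir B) (dir A') != 0,
      cross (dir A') (dir B') != 0 & cross (dir B') (dir A) != 0].
Proof.
by case: hQ => _ _ [] /negP + /negP + /negP + /negP; rewrite !parallel_cross.
Qed.

Lemma qformE :
  qf = sform (qalpha A B A' B') (qbeta A B A' B') (qgamma A B A' B').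
Proof. by []. Qed.

Lemma qform_disc_neq0 :
  qalpha A B A' B' * qgamma A B A' B' - qbeta A B A' B' ^+ 2 != 0.
Proof.
have [hAB hBA' hA'B' hB'A] := adjacent_cross_neq0.
have -> : qalpha A B A' B' * qgamma A B A' B' - qbeta A B A' B' ^+ 2 =
    - (cross (dir A) (dir B) * cross (dir B) (dir A')
       * cross (dir A') (dir B') * cross (dir B') (dir A)).
  by rewrite /qalpha /qbeta /qgamma /cross /=; ring.
by rewrite oppr_eq0 !mulf_neq0.
Qed.

Definition mid_eqs m d : Prop :=
  cross (mid_dir A A' m) d = 0 /\ cross (mid_dir B B' m) d = 0.

Lemma bisector_mid_eqs l m :
  bisector_mid A B A' B' l (Some m) -> mid_eqs m (dir l).
Proof.
case=> hA hB hc; have lm : on_line m l.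
  by case: hc => c; [case: (crosses_mid_dir two_neq0 c (hA c))
                    | case: (crosses_mid_dir two_neq0 c (hB c))].
by split; apply: (mid_dir_of_mid two_neq0).
Qed.

Lemma bisector_finite_mid l : bisector A B A' B' l ->
  exists m, bisector_mid A B A' B' l (Some m).
Proof.
case: hQ => _ _ [nAB nBA' nA'B' nB'A] [[m|] hm]; first by exists m.
case: hm => /no_mid_parallel /orP[] hA /no_mid_parallel /orP[] hB _; exfalso.
- exact/nAB/(parallel_common hA hB).
- exact/nB'A/(parallel_common hB hA).
- exact/nBA'/(parallel_common hB hA).
- exact/nA'B'/(parallel_common hA hB).
Qed.

Lemma cross_mid_grad d :
  cross (mid_grad A A' d) (mid_grad B B' d) = - 2%:R * qf d d.
Proof. rewrite /cross /= /qform /qalpha /qbeta /qgamma /cross /=; ring. Qed.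

Lemma mid_eqs_unique d p q :
  qf d d != 0 -> mid_eqs p d -> mid_eqs q d -> p = q.
Proof.
move=> hd [pA pB] [qA qB]; apply/eqP; rewrite -subr_eq0; apply/eqP.
apply: (@dot_eq0_pair _ (mid_grad A A' d) (mid_grad B B' d)).
- by rewrite cross_mid_grad mulf_neq0 // oppr_eq0.
- by rewrite -cross_mid_dirB pA qA subrr.
- by rewrite -cross_mid_dirB pB qB subrr.
Qed.

Lemma opposite_vertices_neq : meet A B != meet A' B' /\ meet B A' != meet B' A.
Proof.
case: hQ => _ hnc [/negP nAB /negP nBA' /negP nA'B' /negP nB'A].
split; apply/eqP => e; apply: hnc.
- exists (meet A B); split; [exact: leval_meetl nAB | exact: leval_meetr nAB
    | rewrite e; exact: leval_meetl nA'B' | rewrite e; exact: leval_meetr nA'B'].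
- exists (meet B A'); split; [rewrite e; exact: leval_meetr nB'A
    | exact: leval_meetl nBA' | exact: leval_meetr nBA'
    | rewrite e; exact: leval_meetl nB'A].
Qed.

Lemma isotropic_mid_eqs l p : qf (dir l) (dir l) = 0 -> mid_eqs p (dir l) ->
  [\/ parallel A A' /\ parallel l A, parallel B B' /\ parallel l B
    | parallel l (diag1 A B A' B') /\ parallel l (diag2 A B A' B')].
Proof.
move=> iso [pA pB].
have side_pair X Y : mid_grad X Y (dir l) = 0 -> parallel X Y /\ parallel l X.
  move=> /(mid_grad_eq0 two_neq0) [cX cY]; split.
    exact/cross_dir_parallel/(cross_eq0_trans (dir_neq0 l)).
  by apply: cross_dir_parallel; rewrite crossC cX oppr0.
have [gA|gA] := eqVneq (mid_grad A A' (dir l)) 0.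
  by constructor 1; apply: side_pair.
have [gB|gB] := eqVneq (mid_grad B B' (dir l)) 0.
  by constructor 2; apply: side_pair.
have gAB : cross (mid_grad A A' (dir l)) (mid_grad B B' (dir l)) = 0.
  by rewrite cross_mid_grad iso mulr0.
have [k k_neq0 prop] := affine_proportional
  (f := fun x => cross (mid_dir A A' x) (dir l))
  (g := fun x => cross (mid_dir B B' x) (dir l))
  (cross_mid_dirB A A' (dir l)) (cross_mid_dirB B B' (dir l)) gA gB gAB pA pB.
case: hQ => _ _ [/negP nAB /negP nBA' /negP nA'B' /negP nB'A].
have [v13 v24] := opposite_vertices_neq.
constructor 3; split; apply: parallel_line_through => //.
- apply: (proportional_mid_dir_diagonal two_neq0 nAB nA'B' (dir_neq0 l) k_neq0) => //.
  + exact: leval_meetl nAB.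
  + exact: leval_meetr nAB.
  + exact: leval_meetl nA'B'.
  + exact: leval_meetr nA'B'.
- have nA'B : ~~ parallel A' B by rewrite parallel_sym.
  have nAB' : ~~ parallel A B' by rewrite parallel_sym.
  apply: (proportional_mid_dir_diagonal two_neq0 nA'B nAB' (dir_neq0 l) k_neq0).
  + exact: leval_meetr nBA'.
  + exact: leval_meetl nBA'.
  + exact: leval_meetr nB'A.
  + exact: leval_meetl nB'A.
  + by move=> x; rewrite (mid_dirC A' A); apply: prop.
Qed.

Definition antipode p : point K := (2%:R * cen.1 - p.1, 2%:R * cen.2 - p.2).

Lemma midpt_antipode p : midpt p (antipode p) = cen.
Proof. by rewrite /midpt /antipode; case: cen => c1 c2 /=; congr pair; field. Qed.

Lemma midpt_eq_antipode p q : midpt p q = cen -> q = antipode p.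
Proof.
by rewrite /antipode => <-; case: q => x y; rewrite /midpt /=; congr pair; field.
Qed.

Lemma antipodeK : involutive antipode.
Proof. by case=> x y; rewrite /antipode /=; congr pair; ring. Qed.

Lemma antipode_centroid : antipode cen = cen.
Proof. by rewrite /antipode; case: cen => c1 c2 /=; congr pair; ring. Qed.

Definition midconic p := cross (mid_dir A A' p) (mid_dir B B' p).

Lemma qform_mid_dir_antipode p : midconic p = 0 ->
  [/\ qf (mid_dir A A' p) (mid_dir A A' (antipode p)) = 0,
      qf (mid_dir A A' p) (mid_dir B B' (antipode p)) = 0,
      qf (mid_dir B B' p) (mid_dir A A' (antipode p)) = 0 &
      qf (mid_dir B B' p) (mid_dir B B' (antipode p)) = 0].
Proof.
have [] := adjacent_cross_neq0; rewrite /cross /= => hAB hBA' hA'B' hB'A.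
have four_neq0 : (4%:R : K) != 0 by rewrite (natrM K 2 2) mulf_neq0.
move=> h0; have mul_midconic v w c : qf v w = c * midconic p -> qf v w = 0.
  by move=> ->; rewrite h0 mulr0.
pose cAB := - (cross (dir A) (dir B) * cross (dir A') (dir B')
               + cross (dir A) (dir B') * cross (dir A') (dir B)) / 2%:R.
split; [apply: (mul_midconic _ _ (cross (dir A) (dir A') ^+ 2 / 2%:R))
       | apply: (mul_midconic _ _ cAB) | apply: (mul_midconic _ _ cAB)
       | apply: (mul_midconic _ _ (cross (dir B) (dir B') ^+ 2 / 2%:R))];
  rewrite /cAB /midconic /qform /qalpha /qbeta /qgamma /antipode /centroid
    /vtx1 /vtx2 /vtx3 /vtx4 /meet /mid_dir /leval /cross /=;
  by field; rewrite two_neq0 four_neq0 hAB hBA' hA'B' hB'A.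
Qed.

Lemma mid_dir_eq0_centroid p :
  mid_dir A A' p = 0 -> mid_dir B B' p = 0 -> p = cen.
Proof.
have [] := adjacent_cross_neq0; rewrite /cross /= => hAB hBA' hA'B' hB'A.
have four_neq0 : (4%:R : K) != 0 by rewrite (natrM K 2 2) mulf_neq0.
(* Writing each [lv l] through [leval l p] turns the hypotheses below into
   substitutions. *)
have lvE l : lv l = leval l p - lt l * p.1 + lu l * p.2 by rewrite /leval; ring.
case: hQ => _ hnc _.
move=> /mid_dir_eq0[[lA lA'] | [pA sA]] /mid_dir_eq0[[lB lB'] | [pB sB]].
- by case: hnc; exists p.
- have [{}lA {}lA'] : leval A p = 0 /\ leval A' p = 0 by [].
  move: pB; rewrite parallel_dir => /eqP [eu et].
  have lB' : leval B' p = - leval B p by apply/eqP; rewrite -addr_eq0 addrC sB.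
  rewrite -eu -et in hA'B' hB'A.
  rewrite /centroid /vtx1 /vtx2 /vtx3 /vtx4 /meet /= (lvE A) (lvE A') (lvE B) (lvE B').
  rewrite lA lA' lB' -eu -et {1}(surjective_pairing p).
  by congr pair; field; rewrite four_neq0 ?hAB ?hBA' ?hA'B' ?hB'A.
- have [{}lB {}lB'] : leval B p = 0 /\ leval B' p = 0 by [].
  move: pA; rewrite parallel_dir => /eqP [eu et].
  have lA' : leval A' p = - leval A p by apply/eqP; rewrite -addr_eq0 addrC sA.
  rewrite -eu -et in hBA' hA'B'.
  rewrite /centroid /vtx1 /vtx2 /vtx3 /vtx4 /meet /= (lvE A) (lvE A') (lvE B) (lvE B').
  rewrite lB lB' lA' -eu -et {1}(surjective_pairing p).
  by congr pair; field; rewrite four_neq0 ?hAB ?hBA' ?hA'B' ?hB'A.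
- move: pA pB; rewrite !parallel_dir => /eqP [euA etA] /eqP [euB etB].
  have lA' : leval A' p = - leval A p by apply/eqP; rewrite -addr_eq0 addrC sA.
  have lB' : leval B' p = - leval B p by apply/eqP; rewrite -addr_eq0 addrC sB.
  rewrite -euA -etA -euB -etB in hBA' hA'B' hB'A.
  rewrite /centroid /vtx1 /vtx2 /vtx3 /vtx4 /meet /= (lvE A) (lvE A') (lvE B) (lvE B').
  rewrite lA' lB' -euA -etA -euB -etB {1}(surjective_pairing p).
  by congr pair; field; rewrite four_neq0 ?hAB ?hBA' ?hA'B' ?hB'A.
Qed.

Lemma bisector_qform_antipode l m : bisector_mid A B A' B' l (Some m) ->
  qf (dir l) (mid_dir A A' (antipode m)) = 0 /\
  qf (dir l) (mid_dir B B' (antipode m)) = 0.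
Proof.
move=> /bisector_mid_eqs [eA eB].
have [qAA qAB qBA qBB] := qform_mid_dir_antipode
  (cross_eq0_trans (dir_neq0 l) eA eB).
rewrite qformE.
have [zA|nA] := eqVneq (mid_dir A A' m) 0; last first.
  by split; apply: (sform_collinear nA eA).
have [zB|nB] := eqVneq (mid_dir B B' m) 0; last first.
  by split; apply: (sform_collinear nB eB).
have m_cen := mid_dir_eq0_centroid zA zB.
by rewrite m_cen antipode_centroid -m_cen zA zB; split; rewrite /sform /=; ring.
Qed.

Lemma Qorthogonal_bisectors_antipodal l1 l2 :
  bisector A B A' B' l1 -> bisector A B A' B' l2 -> Qorthogonal A B A' B' l1 l2 ->
  ~ both_par_to_parallel_pair A B A' B' l1 l2 -> Qantipodal A B A' B' l1 l2.
Proof.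
move=> /bisector_finite_mid [m1 b1] /bisector_finite_mid [m2 b2].
rewrite /Qorthogonal qformE => ho hnp; exists m1, m2; split=> //.
suff -> : m2 = antipode m1 by exact: midpt_antipode.
have kernel := sform_kernel qform_disc_neq0.
have [oA oB] := bisector_qform_antipode b1; rewrite qformE in oA oB.
have e1 : mid_eqs (antipode m1) (dir l2).
  by split; rewrite crossC (kernel _ _ _ (dir_neq0 l1) ho) ?oppr0.
have e2 := bisector_mid_eqs b2.
have [iso|niso] := eqVneq (qf (dir l2) (dir l2)) 0; last first.
  exact: mid_eqs_unique niso e2 e1.
have p12 : parallel l1 l2.
  by apply: cross_dir_parallel; apply: (kernel _ _ _ (dir_neq0 l2)); rewrite // sformC.
case: hnp; case: (isotropic_mid_eqs iso e2) => [[pA p2A]|[pB p2B]|[p2d1 p2d2]].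
- by constructor 1; rewrite (parallel_trans p12 p2A).
- by constructor 2; rewrite (parallel_trans p12 p2B).
- by constructor 3; rewrite (parallel_common p2d1 p2d2) (parallel_trans p12 p2d1).
Qed.

Lemma antipodal_bisectors_Qorthogonal l1 l2 : Qantipodal A B A' B' l1 l2 ->
  ~ (exists mo, bisector_mid A B A' B' l1 mo /\ bisector_mid A B A' B' l2 mo) ->
  Qorthogonal A B A' B' l1 l2.
Proof.
case=> m1 [m2 [b1 b2 /midpt_eq_antipode e]] distinct.
have m2_neq_cen : m2 != cen.
  apply/eqP => c; apply: distinct; exists (Some m1); split=> //.
  by rewrite -[m1]antipodeK -e c antipode_centroid -c.
have [oA oB] := bisector_qform_antipode b1; rewrite -e qformE in oA oB.
have [eA eB] := bisector_mid_eqs b2.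
rewrite /Qorthogonal qformE sformC.
have [zA|nA] := eqVneq (mid_dir A A' m2) 0; last first.
  by apply: (sform_collinear nA eA); rewrite sformC.
have [zB|nB] := eqVneq (mid_dir B B' m2) 0; last first.
  by apply: (sform_collinear nB eB); rewrite sformC.
by case/eqP: m2_neq_cen; exact: mid_dir_eq0_centroid.
Qed.

End Quadrilateral.

Theorem corollary6p5 (K : fieldType) (hK : (2%:R : K) != 0)
    (A B A' B' : line K) (hQ : quadrilateral A B A' B') :
  (forall l1 l2 : line K,
     bisector A B A' B' l1 -> bisector A B A' B' l2 ->
     Qorthogonal A B A' B' l1 l2 ->
     ~ both_par_to_parallel_pair A B A' B' l1 l2 ->
     Qantipodal A B A' B' l1 l2 /\ Qpair A B A' B' l1 l2) /\
  (forall l1 l2 : line K,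
     bisector A B A' B' l1 -> bisector A B A' B' l2 ->
     Qantipodal A B A' B' l1 l2 ->
     ~ (exists m, bisector_mid A B A' B' l1 m /\ bisector_mid A B A' B' l2 m) ->
     Qorthogonal A B A' B' l1 l2 /\ Qpair A B A' B' l1 l2).
Proof.
split=> l1 l2 b1 b2.
- move=> ho hnp.
  have anti := Qorthogonal_bisectors_antipodal hK hQ b1 b2 ho hnp.
  by split; last split.
- move=> anti hns.
  have ho := antipodal_bisectors_Qorthogonal hK hQ anti hns.
  by split; last split.
Qed.
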